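(* Assume (A1'). A function $u:J_T\to\mathbb{R}$ which is upper semicontinuous (resp. lower semicontinuous) is a sub-solution (resp. super-solution) of $u_t+H(x,u_x)=0$ on $J_T$ if and only if for every $\phi\in C^1_*(J_T)$ such that $u\le\phi$ (resp. $u\ge\phi$) on $J_T$ and $u=\phi$ at some $(t,x)\in J_T$: - if $x\in J_i^*$, then $\phi_t(t,x)+H_i(\phi_x(t,x))\le0$ (resp. $\ge0$); - if $x=0$, then either there exists $i\in I_N$ such that $\phi_t(t,0)+H_i(\phi^i_x(t,0))\le0$ (resp. $\ge0$), or $\phi_t(t,0)+\max_{i\in I_N}H_i^-(\phi^i_x(t,0))\le0$ (resp. $\ge0$).
   Context: Junction: fix an integer $N\ge1$ and $N$ distinct unit vectors $e_1,\dots,e_N\in\mathbb{R}^2$. Set $J_i=[0,\infty)e_i$, $J_i^*=J_i\setminus\{0\}$, $J=\bigcup_{i=1}^NJ_i$, $I_N=\{1,\dots,N\}$. Each $x\in J_i$ is written $x=x_ie_i$, $x_i\ge0$. $J$ carries the geodesic distance $d(x,y)=|x-y|$ if $x,y$ lie in a common branch, $d(x,y)=|x|+|y|$ otherwise. $J_T=(0,T)\times J$; balls are taken in $(0,\infty)\times J$. For $u$ on $J_T$, $u^i$ is its restriction to $(0,T)\times J_i$ as a function of $(t,x_i)$; $C^1_*(J_T)$ is the set of continuous $u$ with each $u^i\in C^1((0,T)\times[0,\infty))$; $u^i_x=\partial u^i/\partial x_i$, $u_x=u^i_x$ on $J_i^*$, $u_x(t,0)=(u^1_x(t,0),\dots,u^N_x(t,0))$.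 (A1'): for each $i\in I_N$, $H_i:\mathbb{R}\to\mathbb{R}$ is continuous with $H_i(p)\to+\infty$ as $|p|\to\infty$, and there is $p^i_0\in\mathbb{R}$ such that $H_i$ is non-increasing on $(-\infty,p_0^i]$ and non-decreasing on $[p_0^i,\infty)$. Then $H_i^-(p)=\inf_{q\le0}H_i(p+q)$. $H(x,p)=H_i(p)$ for $x\in J_i^*$, $H(0,p)=\max_iH_i^-(p_i)$ for $p\in\mathbb{R}^N$. Viscosity solutions: $u$ is a sub-solution (resp. super-solution) of $u_t+H(x,u_x)=0$ on $J_T$ if it is u.s.c. (resp. l.s.c.) and for every $\phi\in C^1_*(J_T)$, $P=(t,x)\in J_T$, $r>0$ with $u\le\phi$ (resp. $u\ge\phi$) on $B(P,r)$ and $u(P)=\phi(P)$: if $x\in J_i^*$ then $\phi_t(t,x)+H_i(\phi_x(t,x))\le0$ (resp. $\ge0$); if $x=0$ then $\phi_t(t,0)+\max_iH_i^-(\phi^i_x(t,0))\le0$ (resp. $\ge0$). *)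

From Stdlib Require Import Reals Lra Classical ClassicalDescription.
Open Scope R_scope.

Definition normR2 (p : R * R) : R := sqrt (fst p ^ 2 + snd p ^ 2).
Definition subR2 (p q : R * R) : R * R := (fst p - fst q, snd p - snd q).
Definition origin : R * R := (0, 0).

(** The point s e_i of branch J_i (branches indexed by i = 0, ..., N-1). *)
Definition pt (e : nat -> R * R) (i : nat) (s : R) : R * R :=
  (s * fst (e i), s * snd (e i)).

Definition junction_dirs (N : nat) (e : nat -> R * R) : Prop :=
  (1 <= N)%nat /\
  (forall i, (i < N)%nat -> normR2 (e i) = 1) /\
  (forall i j, (i < N)%nat -> (j < N)%nat -> i <> j -> e i <> e j).

Definition inJ (N : nat) (e : nat -> R * R) (x : R * R) : Prop :=
  exists i s, (i < N)%nat /\ 0 <= s /\ x = pt e i s.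

Definition inJstar (N : nat) (e : nat -> R * R) (i : nat) (s : R) (x : R * R) : Prop :=
  (i < N)%nat /\ 0 < s /\ x = pt e i s.

Definition sameBranch (N : nat) (e : nat -> R * R) (x y : R * R) : Prop :=
  exists i s s', (i < N)%nat /\ 0 <= s /\ 0 <= s' /\ x = pt e i s /\ y = pt e i s'.

Definition dJ (N : nat) (e : nat -> R * R) (x y : R * R) : R :=
  match excluded_middle_informative (sameBranch N e x y) with
  | left _ => normR2 (subR2 x y)
  | right _ => normR2 x + normR2 y
  end.

Definition inJT (N : nat) (e : nat -> R * R) (T t : R) (x : R * R) : Prop :=
  0 < t < T /\ inJ N e x.

Definition inBallJT (N : nat) (e : nat -> R * R) (T t : R) (x : R * R) (r t' : R) (y : R * R) : Prop :=
  inJT N e T t' y /\ Rabs (t' - t) < r /\ dJ N e x y < r.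

Definition usc_JT (N : nat) (e : nat -> R * R) (T : R) (u : R -> R * R -> R) : Prop :=
  forall t x, inJT N e T t x ->
  forall eps, 0 < eps -> exists delta, 0 < delta /\
    forall t' y, inBallJT N e T t x delta t' y -> u t' y < u t x + eps.

Definition lsc_JT (N : nat) (e : nat -> R * R) (T : R) (u : R -> R * R -> R) : Prop :=
  forall t x, inJT N e T t x ->
  forall eps, 0 < eps -> exists delta, 0 < delta /\
    forall t' y, inBallJT N e T t x delta t' y -> u t x - eps < u t' y.

Definition cont_JT (N : nat) (e : nat -> R * R) (T : R) (u : R -> R * R -> R) : Prop :=
  forall t x, inJT N e T t x ->
  forall eps, 0 < eps -> exists delta, 0 < delta /\
    forall t' y, inBallJT N e T t x delta t' y -> Rabs (u t' y - u t x) < eps.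

Definition inHS (T t s : R) : Prop := 0 < t < T /\ 0 <= s.

Definition cont_HS (T : R) (g : R -> R -> R) : Prop :=
  forall t s, inHS T t s ->
  forall eps, 0 < eps -> exists delta, 0 < delta /\
    forall t' s', inHS T t' s' -> Rabs (t' - t) < delta -> Rabs (s' - s) < delta ->
      Rabs (g t' s' - g t s) < eps.

Definition C1_HS (T : R) (f ft fs : R -> R -> R) : Prop :=
  cont_HS T ft /\ cont_HS T fs /\
  forall t s, inHS T t s ->
  forall eps, 0 < eps -> exists delta, 0 < delta /\
    forall t' s', inHS T t' s' -> Rabs (t' - t) < delta -> Rabs (s' - s) < delta ->
      Rabs (f t' s' - f t s - ft t s * (t' - t) - fs t s * (s' - s))
        <= eps * (Rabs (t' - t) + Rabs (s' - s)).

(** phi \in C^1_*(J_T), with time derivative Dt (phi_t(t,x) = Dt t x) and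
    branch space derivatives Dx (phi^i_x(t,s) = Dx i t s). *)
Definition C1star (N : nat) (e : nat -> R * R) (T : R) (phi : R -> R * R -> R)
    (Dt : R -> R * R -> R) (Dx : nat -> R -> R -> R) : Prop :=
  cont_JT N e T phi /\
  forall i, (i < N)%nat ->
    C1_HS T (fun t s => phi t (pt e i s)) (fun t s => Dt t (pt e i s)) (Dx i).

(** Infimum of a set of reals (0 by convention if not bounded below / empty). *)
Definition Rinf (E : R -> Prop) : R :=
  match excluded_middle_informative
          (bound (fun x => E (- x)) /\ exists x, E (- x)) with
  | left h => - proj1_sig (completeness _ (proj1 h) (proj2 h))
  | right _ => 0
  end.

Definition Hminus (H : R -> R) (p : R) : R :=
  Rinf (fun y => exists q, q <= 0 /\ y = H (p + q)).

Fixpoint maxUpTo (f : nat -> R) (n : nat) : R :=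
  match n with
  | O => f O
  | S m => Rmax (maxUpTo f m) (f (S m))
  end.

(** max_{i in I_N} f i  (N >= 1, indices 0..N-1) *)
Definition maxI (N : nat) (f : nat -> R) : R := maxUpTo f (N - 1).

Definition H0 (N : nat) (H : nat -> R -> R) (p : nat -> R) : R :=
  maxI N (fun i => Hminus (H i) (p i)).

Definition A1' (N : nat) (H : nat -> R -> R) : Prop :=
  forall i, (i < N)%nat ->
    (forall p, continuity_pt (H i) p) /\
    (forall M, exists K, forall p, K < Rabs p -> M < H i p) /\
    (exists p0, (forall p q, p <= q <= p0 -> H i q <= H i p) /\
                (forall p q, p0 <= p <= q -> H i p <= H i q)).

Definition subsol (N : nat) (e : nat -> R * R) (T : R) (H : nat -> R -> R)
    (u : R -> R * R -> R) : Prop :=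
  usc_JT N e T u /\
  forall phi Dt Dx, C1star N e T phi Dt Dx ->
  forall t x r, inJT N e T t x -> 0 < r ->
    (forall t' y, inBallJT N e T t x r t' y -> u t' y <= phi t' y) ->
    u t x = phi t x ->
    (forall i s, inJstar N e i s x -> Dt t x + H i (Dx i t s) <= 0) /\
    (x = origin -> Dt t origin + H0 N H (fun i => Dx i t 0) <= 0).

Definition supersol (N : nat) (e : nat -> R * R) (T : R) (H : nat -> R -> R)
    (u : R -> R * R -> R) : Prop :=
  lsc_JT N e T u /\
  forall phi Dt Dx, C1star N e T phi Dt Dx ->
  forall t x r, inJT N e T t x -> 0 < r ->
    (forall t' y, inBallJT N e T t x r t' y -> phi t' y <= u t' y) ->
    u t x = phi t x ->
    (forall i s, inJstar N e i s x -> 0 <= Dt t x + H i (Dx i t s)) /\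
    (x = origin -> 0 <= Dt t origin + H0 N H (fun i => Dx i t 0)).

Definition subchar (N : nat) (e : nat -> R * R) (T : R) (H : nat -> R -> R)
    (u : R -> R * R -> R) : Prop :=
  forall phi Dt Dx, C1star N e T phi Dt Dx ->
    (forall t' y, inJT N e T t' y -> u t' y <= phi t' y) ->
  forall t x, inJT N e T t x -> u t x = phi t x ->
    (forall i s, inJstar N e i s x -> Dt t x + H i (Dx i t s) <= 0) /\
    (x = origin ->
       (exists i, (i < N)%nat /\ Dt t origin + H i (Dx i t 0) <= 0) \/
       Dt t origin + H0 N H (fun i => Dx i t 0) <= 0).

Definition superchar (N : nat) (e : nat -> R * R) (T : R) (H : nat -> R -> R)
    (u : R -> R * R -> R) : Prop :=
  forall phi Dt Dx, C1star N e T phi Dt Dx ->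
    (forall t' y, inJT N e T t' y -> phi t' y <= u t' y) ->
  forall t x, inJT N e T t x -> u t x = phi t x ->
    (forall i s, inJstar N e i s x -> 0 <= Dt t x + H i (Dx i t s)) /\
    (x = origin ->
       (exists i, (i < N)%nat /\ 0 <= Dt t origin + H i (Dx i t 0)) \/
       0 <= Dt t origin + H0 N H (fun i => Dx i t 0)).

From Stdlib Require Import Reals Lra Lia ZArith Classical ClassicalEpsilon.
From Coquelicot Require Import Coquelicot.
Open Scope R_scope.

(** The "only if" directions are immediate: a globally touching test function
    touches locally in every ball, and the max_i H_i^- condition at the origin
    is one of the two alternatives of the relaxed condition.

    For the "if" directions two facts are established.
    1. Localization ([localize]): a C^1_* function touching an usc function from
       above on a ball around (t0,x0) is turned into one touching it on all of
       J_T by adding the penalty G(time level) + G(space level).  The time level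
       comes from a weight blowing up at t = 0 and t = T, the space level from
       the squared geodesic distance to x0; both are <= 0 near (t0,x0), where
       the penalty vanishes to first order.  The C^1 function G, flat on
       (-oo,0], is built from hinges (y - k)_+^2 so as to dominate the bounds of
       u - phi on the compact sublevel sets, which exist by upper
       semicontinuity and a covering argument on segments.
    2. Junction condition ([subchar_junction], [superchar_junction]): if the
       max_i H_i^- condition failed at the origin, adding slopes c_k on the
       branches (c_k >= 0 for sub-, c_k <= 0 for supersolutions, chosen using
       the coercivity of H_k, resp. the definition of H_k^-) would give a test
       function violating the relaxed condition as well.
    Supersolutions are handled by localizing -phi against the usc function -u. *)

Lemma continuity_pt_eps f x : continuity_pt f x -> forall eps, 0 < eps ->
  exists d, 0 < d /\ forall y, Rabs (y - x) < d -> Rabs (f y - f x) < eps.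
Proof.
  intros Hc eps He. destruct (Hc eps He) as [d [Hd Hf]]. exists d; split; auto.
  intros y Hy. destruct (Req_dec y x) as [->|Hne].
  - rewrite Rminus_diag, Rabs_R0; auto.
  - apply (Hf y). split; [split; [exact I|exact (not_eq_sym Hne)]|exact Hy].
Qed.

Lemma eps_continuity_pt f x : (forall eps, 0 < eps ->
  exists d, 0 < d /\ forall y, Rabs (y - x) < d -> Rabs (f y - f x) < eps) ->
  continuity_pt f x.
Proof.
  intros Hf eps He. destruct (Hf eps He) as [d [Hd Hd']]. exists d; split; auto.
  intros y [_ Hy]. apply Hd'. exact Hy.
Qed.

Lemma derivable_pt_lim_taylor f x l : derivable_pt_lim f x l -> forall eps, 0 < eps ->
  exists d, 0 < d /\ forall y, Rabs (y - x) < d ->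
    Rabs (f y - f x - l * (y - x)) <= eps * Rabs (y - x).
Proof.
  intros Hd eps He. destruct (Hd eps He) as [d Hq]. exists d; split; [apply cond_pos|].
  intros y Hy. destruct (Req_dec y x) as [->|Hne].
  - replace (f x - f x - l * (x - x)) with 0 by ring. rewrite Rminus_diag, Rabs_R0; lra.
  - assert (Hh : y - x <> 0) by lra. specialize (Hq (y - x) Hh Hy).
    replace (x + (y - x)) with y in Hq by ring.
    replace (f y - f x - l * (y - x)) with (((f y - f x) / (y - x) - l) * (y - x))
      by (field; auto).
    rewrite Rabs_mult. apply Rmult_le_compat_r; [apply Rabs_pos|lra].
Qed.

(** Differentiability implies continuity, for the Stdlib and for the
    Coquelicot notion of derivative ([auto_derive] produces the latter). *)
Lemma derivable_pt_lim_continuity f x l : derivable_pt_lim f x l -> continuity_pt f x.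
Proof. intros Hd. apply derivable_continuous_pt. exists l. exact Hd. Qed.

Lemma ex_derive_continuity (f : R -> R) x : ex_derive f x -> continuity_pt f x.
Proof.
  intros Hd. apply continuity_pt_filterlim.
  exact (@ex_derive_continuous R_AbsRing R_NormedModule f x Hd).
Qed.

Lemma common_radius (P : nat -> R -> Prop) n :
  (forall m d d', 0 < d' <= d -> P m d -> P m d') ->
  (forall m, (m < n)%nat -> exists d, 0 < d /\ P m d) ->
  exists d, 0 < d /\ forall m, (m < n)%nat -> P m d.
Proof.
  intros Hmon. induction n as [|n IH]; intros Hall.
  - exists 1; split; [lra|]. intros; lia.
  - destruct IH as [d1 [Hd1 H1]]; [intros m Hm; apply Hall; lia|].
    destruct (Hall n) as [d2 [Hd2 H2]]; [lia|].
    assert (Hmin := Rmin_glb_lt d1 d2 0 Hd1 Hd2).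
    pose proof (Rmin_l d1 d2). pose proof (Rmin_r d1 d2).
    exists (Rmin d1 d2); split; auto. intros m Hm. destruct (Nat.eq_dec m n) as [->|].
    + apply Hmon with d2; auto; lra.
    + apply Hmon with d1; [lra|]. apply H1; lia.
Qed.

Lemma common_bound (P : nat -> R -> Prop) n :
  (forall m M M', M <= M' -> P m M -> P m M') ->
  (forall m, (m < n)%nat -> exists M, P m M) ->
  exists M, forall m, (m < n)%nat -> P m M.
Proof.
  intros Hmon. induction n as [|n IH]; intros Hall.
  - exists 0. intros; lia.
  - destruct IH as [M1 H1]; [intros m Hm; apply Hall; lia|].
    destruct (Hall n) as [M2 H2]; [lia|].
    exists (Rmax M1 M2). intros m Hm. destruct (Nat.eq_dec m n) as [->|].
    + apply Hmon with M2; auto. apply Rmax_r.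
    + apply Hmon with M1; [apply Rmax_l|]. apply H1; lia.
Qed.

(** The proof takes the
    supremum of the points up to which it holds uniformly. *)
Lemma segment_uniform (a b : R) (G : R -> R -> R -> Prop) : a <= b ->
  (forall d d' M M' y, 0 < d' <= d -> M <= M' -> G d M y -> G d' M' y) ->
  (forall x, a <= x <= b -> exists r d M, 0 < r /\ 0 < d /\
       forall y, a <= y <= b -> Rabs (y - x) < r -> G d M y) ->
  exists d M, 0 < d /\ forall y, a <= y <= b -> G d M y.
Proof.
  intros Hab Hmon Hloc.
  set (S := fun c => a <= c <= b /\ exists d M, 0 < d /\ forall y, a <= y <= c -> G d M y).
  assert (Sa : S a).
  { destruct (Hloc a (conj (Rle_refl a) Hab)) as [r [d [M [Hr [Hd Ha]]]]].
    split; [lra|]. exists d, M; split; auto. intros y Hy. apply Ha; [lra|].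
    replace (y - a) with 0 by lra. rewrite Rabs_R0; lra. }
  destruct (completeness S (ex_intro _ b (fun c Hc => proj2 (proj1 Hc))) (ex_intro _ a Sa))
    as [c [Hub Hlub]].
  assert (Hac : a <= c) by (apply Hub; auto).
  assert (Hcb : c <= b) by (apply Hlub; intros x [Hx _]; lra).
  destruct (Hloc c (conj Hac Hcb)) as [r [d1 [M1 [Hr [Hd1 H1]]]]].
  (* some point of S lies within r of the supremum *)
  assert (Hnear : exists c1, S c1 /\ c - r < c1).
  { apply NNPP; intro Hn. assert (c <= c - r); [|lra].
    apply Hlub. intros x Hx. apply Rnot_lt_le. intro Hlt. apply Hn. exists x; auto. }
  destruct Hnear as [c1 [[Hc1 [d2 [M2 [Hd2 H2]]]] Hc1r]].
  assert (Hc1c : c1 <= c) by (apply Hub; split; auto; exists d2, M2; auto).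
  (* hence S also contains min(b, c + r/2), which forces c = b *)
  set (c' := Rmin b (c + r/2)).
  assert (Hc'b : c' <= b) by apply Rmin_l.
  assert (Hc'r : c' <= c + r/2) by apply Rmin_r.
  assert (Sc' : S c').
  { split; [split; [apply Rmin_glb; lra|lra]|].
    exists (Rmin d1 d2), (Rmax M1 M2). split; [apply Rmin_glb_lt; auto|].
    assert (0 < Rmin d1 d2) by (apply Rmin_glb_lt; auto).
    intros y Hy. destruct (Rle_dec y c1).
    - apply Hmon with d2 M2; [split; auto; apply Rmin_r|apply Rmax_r|]. apply H2; lra.
    - apply Hmon with d1 M1; [split; auto; apply Rmin_l|apply Rmax_l|].
      apply H1; [lra|]. apply Rabs_def1; lra. }
  assert (Hc'c : c' <= c) by (apply Hub; auto).
  assert (c' = b) by (unfold c' in *; revert Hc'c; apply Rmin_case_strong; intros; lra).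
  destruct Sc' as [_ [d [M [Hd Hf]]]]. exists d, M; split; auto.
  intros y Hy; apply Hf; lra.
Qed.

Lemma cont_HS_ext T f g :
  (forall t s, inHS T t s -> f t s = g t s) -> cont_HS T g -> cont_HS T f.
Proof.
  intros E Hg t s Hts eps He. destruct (Hg t s Hts eps He) as [d [Hd Hd']].
  exists d; split; auto. intros t' s' Hts' H1 H2. rewrite !E; auto.
Qed.

Lemma cont_HS_plus T f g :
  cont_HS T f -> cont_HS T g -> cont_HS T (fun t s => f t s + g t s).
Proof.
  intros Hf Hg t s Hts eps He.
  destruct (Hf t s Hts (eps/2)) as [d1 [Hd1 H1]]; [lra|].
  destruct (Hg t s Hts (eps/2)) as [d2 [Hd2 H2]]; [lra|].
  exists (Rmin d1 d2); split; [apply Rmin_glb_lt; auto|].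
  intros t' s' Hts' Ht Hs. pose proof (Rmin_l d1 d2). pose proof (Rmin_r d1 d2).
  specialize (H1 t' s' Hts' ltac:(lra) ltac:(lra)).
  specialize (H2 t' s' Hts' ltac:(lra) ltac:(lra)).
  replace (f t' s' + g t' s' - (f t s + g t s))
    with ((f t' s' - f t s) + (g t' s' - g t s)) by ring.
  eapply Rle_lt_trans; [apply Rabs_triang|]. lra.
Qed.

Lemma cont_HS_opp T f : cont_HS T f -> cont_HS T (fun t s => - f t s).
Proof.
  intros Hf t s Hts eps He. destruct (Hf t s Hts eps He) as [d [Hd Hd']].
  exists d; split; auto. intros t' s' Hts' H1 H2.
  replace (- f t' s' - - f t s) with (- (f t' s' - f t s)) by ring. rewrite Rabs_Ropp; auto.
Qed.

Lemma cont_HS_time T F :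
  (forall t, 0 < t < T -> continuity_pt F t) -> cont_HS T (fun t _ => F t).
Proof.
  intros Hc t s [Ht _] eps He.
  destruct (continuity_pt_eps F t (Hc t Ht) eps He) as [d [Hd Hd']]. exists d; split; auto.
Qed.

Lemma cont_HS_space T h : (forall s, continuity_pt h s) -> cont_HS T (fun _ s => h s).
Proof.
  intros Hc t s _ eps He.
  destruct (continuity_pt_eps h s (Hc s) eps He) as [d [Hd Hd']]. exists d; split; auto.
Qed.

Lemma cont_HS_const T c : cont_HS T (fun _ _ => c).
Proof. apply cont_HS_space. intros s. apply continuity_pt_const. intros x y; auto. Qed.

Lemma C1_HS_ext T f ft fs g gt gs :
  (forall t s, inHS T t s -> f t s = g t s) ->
  (forall t s, inHS T t s -> ft t s = gt t s) ->
  (forall t s, inHS T t s -> fs t s = gs t s) ->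
  C1_HS T g gt gs -> C1_HS T f ft fs.
Proof.
  intros E1 E2 E3 [H1 [H2 H3]]. split; [|split]; [eapply cont_HS_ext; eauto ..|].
  intros t s Hts eps He. destruct (H3 t s Hts eps He) as [d [Hd Hd']].
  exists d; split; auto. intros t' s' Hts' Ht Hs. rewrite E1, E1, E2, E3; auto.
Qed.

Lemma C1_HS_plus T f ft fs g gt gs : C1_HS T f ft fs -> C1_HS T g gt gs ->
  C1_HS T (fun t s => f t s + g t s) (fun t s => ft t s + gt t s)
          (fun t s => fs t s + gs t s).
Proof.
  intros [A1 [A2 A3]] [B1 [B2 B3]]. split; [|split]; try (apply cont_HS_plus; auto).
  intros t s Hts eps He.
  destruct (A3 t s Hts (eps/2)) as [d1 [Hd1 H1]]; [lra|].
  destruct (B3 t s Hts (eps/2)) as [d2 [Hd2 H2]]; [lra|].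
  exists (Rmin d1 d2); split; [apply Rmin_glb_lt; auto|].
  intros t' s' Hts' Ht Hs. pose proof (Rmin_l d1 d2). pose proof (Rmin_r d1 d2).
  specialize (H1 t' s' Hts' ltac:(lra) ltac:(lra)).
  specialize (H2 t' s' Hts' ltac:(lra) ltac:(lra)).
  match goal with |- Rabs ?X <= _ => replace X with
    ((f t' s' - f t s - ft t s * (t' - t) - fs t s * (s' - s)) +
     (g t' s' - g t s - gt t s * (t' - t) - gs t s * (s' - s))) by ring end.
  eapply Rle_trans; [apply Rabs_triang|]. lra.
Qed.

Lemma C1_HS_opp T f ft fs : C1_HS T f ft fs ->
  C1_HS T (fun t s => - f t s) (fun t s => - ft t s) (fun t s => - fs t s).
Proof.
  intros [A1 [A2 A3]]. split; [|split]; try (apply cont_HS_opp; auto).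
  intros t s Hts eps He. destruct (A3 t s Hts eps He) as [d [Hd Hd']].
  exists d; split; auto. intros t' s' Hts' Ht Hs.
  match goal with |- Rabs ?X <= _ => replace X with
    (- (f t' s' - f t s - ft t s * (t' - t) - fs t s * (s' - s))) by ring end.
  rewrite Rabs_Ropp; auto.
Qed.

Lemma C1_HS_time T F F' : (forall t, 0 < t < T -> derivable_pt_lim F t (F' t)) ->
  (forall t, 0 < t < T -> continuity_pt F' t) ->
  C1_HS T (fun t _ => F t) (fun t _ => F' t) (fun _ _ => 0).
Proof.
  intros Hd Hc. split; [apply cont_HS_time; auto|split; [apply cont_HS_const|]].
  intros t s [Ht _] eps He.
  destruct (derivable_pt_lim_taylor F t (F' t) (Hd t Ht) eps He) as [d [Hd0 Hd']].
  exists d; split; auto. intros t' s' _ H1 H2. specialize (Hd' t' H1).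
  replace (F t' - F t - F' t * (t' - t) - 0 * (s' - s))
    with (F t' - F t - F' t * (t' - t)) by ring.
  assert (0 <= eps * Rabs (s' - s)) by (apply Rmult_le_pos; [lra|apply Rabs_pos]). nra.
Qed.

Lemma C1_HS_space T h h' : (forall s, derivable_pt_lim h s (h' s)) ->
  (forall s, continuity_pt h' s) ->
  C1_HS T (fun _ s => h s) (fun _ _ => 0) (fun _ s => h' s).
Proof.
  intros Hd Hc. split; [apply cont_HS_const|split; [apply cont_HS_space; auto|]].
  intros t s _ eps He.
  destruct (derivable_pt_lim_taylor h s (h' s) (Hd s) eps He) as [d [Hd0 Hd']].
  exists d; split; auto. intros t' s' _ H1 H2. specialize (Hd' s' H2).
  replace (h s' - h s - 0 * (t' - t) - h' s * (s' - s))
    with (h s' - h s - h' s * (s' - s)) by ring.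
  assert (0 <= eps * Rabs (t' - t)) by (apply Rmult_le_pos; [lra|apply Rabs_pos]). nra.
Qed.

Lemma C1_HS_cont T f ft fs : C1_HS T f ft fs -> cont_HS T f.
Proof.
  intros [_ [_ Hd]] t s Hts eps He.
  destruct (Hd t s Hts 1 ltac:(lra)) as [d [Hd0 Hd']].
  set (K := Rabs (ft t s) + Rabs (fs t s) + 1).
  pose proof (Rabs_pos (ft t s)). pose proof (Rabs_pos (fs t s)).
  assert (HK : 0 < K) by (unfold K; lra).
  exists (Rmin d (eps / (2 * K))).
  split; [apply Rmin_glb_lt; [lra|apply Rdiv_lt_0_compat; lra]|].
  intros t' s' Hts' H1 H2. pose proof (Rmin_l d (eps / (2 * K))).
  pose proof (Rmin_r d (eps / (2 * K))).
  specialize (Hd' t' s' Hts' ltac:(lra) ltac:(lra)).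
  assert (Hsplit : Rabs (f t' s' - f t s) <=
            Rabs (f t' s' - f t s - ft t s * (t' - t) - fs t s * (s' - s))
            + Rabs (ft t s) * Rabs (t' - t) + Rabs (fs t s) * Rabs (s' - s)).
  { rewrite <- !Rabs_mult.
    replace (f t' s' - f t s) with ((f t' s' - f t s - ft t s * (t' - t) - fs t s * (s' - s))
             + ft t s * (t' - t) + fs t s * (s' - s)) at 1 by ring.
    eapply Rle_trans; [apply Rabs_triang|]. apply Rplus_le_compat_r. apply Rabs_triang. }
  assert (Hsum : Rabs (t' - t) + Rabs (s' - s) < eps / K).
  { replace (eps / K) with (2 * (eps / (2 * K))) by (field; lra). lra. }
  assert (Hsmall : K * (Rabs (t' - t) + Rabs (s' - s)) < eps).
  { apply (Rmult_lt_compat_l K) in Hsum; auto.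
    replace (K * (eps / K)) with eps in Hsum by (field; lra). lra. }
  pose proof (Rabs_pos (t' - t)). pose proof (Rabs_pos (s' - s)). unfold K in *. nra.
Qed.

Definition usc_HS (T : R) (f : R -> R -> R) : Prop :=
  forall t s, inHS T t s -> forall eps, 0 < eps -> exists d, 0 < d /\
    forall t' s', inHS T t' s' -> Rabs (t' - t) < d -> Rabs (s' - s) < d ->
      f t' s' < f t s + eps.

Lemma usc_HS_bounded T f a b L : usc_HS T f -> 0 < a -> a <= b -> b < T -> 0 <= L ->
  exists M, forall t s, a <= t <= b -> 0 <= s <= L -> f t s <= M.
Proof.
  intros Hf Ha Hab Hb HL.
  (* bounded on a time-tube around each segment {t0} x [0,L] *)
  assert (Tube : forall t0, 0 < t0 < T -> exists d M, 0 < d /\ forall s, 0 <= s <= L ->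
             forall t, 0 < t < T -> Rabs (t - t0) < d -> f t s <= M).
  { intros t0 Ht0.
    apply (segment_uniform 0 L
             (fun d M s => forall t, 0 < t < T -> Rabs (t - t0) < d -> f t s <= M)); auto.
    - intros d d' M M' y Hd HM Hy t Ht Htd. apply Rle_trans with M; auto. apply Hy; auto; lra.
    - intros x Hx. destruct (Hf t0 x (conj Ht0 (proj1 Hx)) 1) as [d [Hd Hd']]; [lra|].
      exists d, d, (f t0 x + 1). split; auto; split; auto. intros y Hy Hyx t Ht Htd.
      left. apply Hd'; auto. split; auto; lra. }
  destruct (segment_uniform a b (fun _ M t => forall s, 0 <= s <= L -> f t s <= M))
    as [_ [M [_ HM]]]; auto.
  - intros d d' M M' y _ HMM Hy s Hs. apply Rle_trans with M; auto.
  - intros x Hx. destruct (Tube x ltac:(lra)) as [d [M [Hd HdM]]].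
    exists d, 1, M. split; auto; split; [lra|]. intros y Hy Hyx s Hs. apply HdM; auto; lra.
  - exists M. intros t s Ht Hs. apply HM; auto.
Qed.

(** * A C^1 function of arbitrarily fast growth, flat on (-oo,0]

    For a sequence c >= 0 we glue the C^1 hinges c_k (y - k)_+^2; on
    (-oo, M] only the first M + 1 of them are nonzero, so the infinite sum is
    locally a finite one. *)

Definition pos_part (y : R) : R := (y + Rabs y) / 2.
Definition sq_pos (y : R) : R := pos_part y * pos_part y.
Definition dsq_pos (y : R) : R := 2 * pos_part y.

Lemma pos_part_cases y : (y <= 0 /\ pos_part y = 0) \/ (0 < y /\ pos_part y = y).
Proof.
  unfold pos_part. destruct (Rle_dec y 0).
  - left; rewrite Rabs_left1; [split; [auto|lra]|auto].
  - right; rewrite Rabs_right; lra.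
Qed.

Lemma sq_pos_taylor y h : Rabs (sq_pos (y + h) - sq_pos y - dsq_pos y * h) <= h * h.
Proof.
  unfold sq_pos, dsq_pos.
  destruct (pos_part_cases y) as [[A ->]|[A ->]];
  destruct (pos_part_cases (y + h)) as [[B ->]|[B ->]]; rewrite Rabs_right; nra.
Qed.

Lemma dsq_pos_lipschitz a b : Rabs (dsq_pos a - dsq_pos b) <= 2 * Rabs (a - b).
Proof.
  unfold dsq_pos.
  destruct (pos_part_cases a) as [[A ->]|[A ->]];
  destruct (pos_part_cases b) as [[B ->]|[B ->]].
  - rewrite Rminus_diag, Rabs_R0. pose proof (Rabs_pos (a - b)). lra.
  - rewrite (Rabs_left1 (a - b)), Rabs_left1; lra.
  - rewrite (Rabs_right (a - b)), Rabs_right; lra.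
  - replace (2 * a - 2 * b) with (2 * (a - b)) by ring. rewrite Rabs_mult, Rabs_right; lra.
Qed.

Lemma sq_pos_nonneg y : 0 <= sq_pos y.
Proof. apply Rle_0_sqr. Qed.

Lemma sq_pos_flat y : y <= 0 -> sq_pos y = 0 /\ dsq_pos y = 0.
Proof.
  intros Hy. unfold sq_pos, dsq_pos.
  destruct (pos_part_cases y) as [[_ ->]|[A _]]; [split; ring|lra].
Qed.

Lemma sq_pos_ge1 y : 1 <= y -> 1 <= sq_pos y.
Proof. intros Hy. unfold sq_pos. destruct (pos_part_cases y) as [[A _]|[_ ->]]; nra. Qed.

Section Hinges.
Variable c : nat -> R.

Fixpoint hinges (n : nat) (y : R) : R :=
  match n with
  | O => c 0 * sq_pos (y - INR 0)
  | S m => hinges m y + c (S m) * sq_pos (y - INR (S m))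
  end.
Fixpoint dhinges (n : nat) (y : R) : R :=
  match n with
  | O => c 0 * dsq_pos (y - INR 0)
  | S m => dhinges m y + c (S m) * dsq_pos (y - INR (S m))
  end.
Fixpoint coef_mass (n : nat) : R :=
  match n with O => Rabs (c 0) | S m => coef_mass m + Rabs (c (S m)) end.

Lemma coef_mass_nonneg n : 0 <= coef_mass n.
Proof.
  induction n; simpl; [apply Rabs_pos|]. pose proof (Rabs_pos (c (S n))). lra.
Qed.

Lemma hinge_taylor k y h :
  Rabs (c k * sq_pos (y + h - INR k) - c k * sq_pos (y - INR k)
        - c k * dsq_pos (y - INR k) * h) <= Rabs (c k) * (h * h).
Proof.
  replace (c k * sq_pos (y + h - INR k) - c k * sq_pos (y - INR k)
           - c k * dsq_pos (y - INR k) * h)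
    with (c k * (sq_pos ((y - INR k) + h) - sq_pos (y - INR k) - dsq_pos (y - INR k) * h))
    by (replace (y - INR k + h) with (y + h - INR k) by ring; ring).
  rewrite Rabs_mult. apply Rmult_le_compat_l; [apply Rabs_pos|apply sq_pos_taylor].
Qed.

Lemma hinges_taylor n y h :
  Rabs (hinges n (y + h) - hinges n y - dhinges n y * h) <= coef_mass n * (h * h).
Proof.
  induction n as [|n IH]; cbn [hinges dhinges coef_mass]; [apply hinge_taylor|].
  pose proof (hinge_taylor (S n) y h).
  match goal with |- Rabs ?X <= _ => replace X with
    ((hinges n (y + h) - hinges n y - dhinges n y * h) +
     (c (S n) * sq_pos (y + h - INR (S n)) - c (S n) * sq_pos (y - INR (S n))
      - c (S n) * dsq_pos (y - INR (S n)) * h)) by ring end.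
  eapply Rle_trans; [apply Rabs_triang|]. nra.
Qed.

Lemma dhinges_lipschitz n a b :
  Rabs (dhinges n a - dhinges n b) <= 2 * coef_mass n * Rabs (a - b).
Proof.
  assert (Term : forall k, Rabs (c k * dsq_pos (a - INR k) - c k * dsq_pos (b - INR k))
                           <= 2 * Rabs (c k) * Rabs (a - b)).
  { intro k. rewrite <- Rmult_minus_distr_l, Rabs_mult.
    pose proof (dsq_pos_lipschitz (a - INR k) (b - INR k)) as Hl.
    replace (a - INR k - (b - INR k)) with (a - b) in Hl by ring.
    pose proof (Rabs_pos (c k)). nra. }
  induction n as [|n IH]; cbn [dhinges coef_mass]; [apply Term|].
  pose proof (Term (S n)).
  match goal with |- Rabs ?X <= _ => replace X with
    ((dhinges n a - dhinges n b) +
     (c (S n) * dsq_pos (a - INR (S n)) - c (S n) * dsq_pos (b - INR (S n)))) by ring end.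
  eapply Rle_trans; [apply Rabs_triang|]. nra.
Qed.

(** Hinges with index >= y vanish at y, so the partial sums stabilize. *)
Lemma hinges_stable M k y : y <= INR M ->
  hinges (M + k) y = hinges M y /\ dhinges (M + k) y = dhinges M y.
Proof.
  intros Hy. induction k as [|k IH]; [rewrite Nat.add_0_r; auto|].
  rewrite Nat.add_succ_r. cbn [hinges dhinges]. destruct IH as [-> ->].
  destruct (sq_pos_flat (y - INR (S (M + k)))) as [-> ->]; [|split; ring].
  rewrite S_INR, plus_INR. pose proof (pos_INR k). lra.
Qed.

Lemma hinges_indep M M' y : y <= INR M -> y <= INR M' ->
  hinges M y = hinges M' y /\ dhinges M y = dhinges M' y.
Proof.
  intros Hy Hy'. destruct (Nat.le_ge_cases M M') as [L|L].
  - replace M' with (M + (M' - M))%nat by lia.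
    destruct (hinges_stable M (M' - M) y Hy) as [-> ->]; auto.
  - replace M with (M' + (M - M'))%nat by lia.
    destruct (hinges_stable M' (M - M') y Hy') as [-> ->]; auto.
Qed.

Definition nat_above (y : R) : nat := Z.to_nat (up y).

Lemma nat_above_ge y : y <= INR (nat_above y).
Proof.
  unfold nat_above. destruct (archimed y) as [A _].
  destruct (Z.lt_ge_cases (up y) 0) as [l|l].
  - replace (Z.to_nat (up y)) with 0%nat by (destruct (up y); simpl; lia).
    simpl. apply IZR_lt in l. lra.
  - rewrite INR_IZR_INZ, Z2Nat.id by lia. lra.
Qed.

(** The full sum of the hinges and its derivative. *)
Definition Gamma (y : R) : R := hinges (nat_above y) y.
Definition dGamma (y : R) : R := dhinges (nat_above y) y.

Lemma Gamma_local M y : y <= INR M -> Gamma y = hinges M y /\ dGamma y = dhinges M y.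
Proof. intros Hy. apply hinges_indep; auto. apply nat_above_ge. Qed.

(** Gamma is C^1: near y it coincides with a fixed finite partial sum. *)
Lemma Gamma_derive y : derivable_pt_lim Gamma y (dGamma y).
Proof.
  intros eps He. set (M := nat_above (y + 1)).
  pose proof (nat_above_ge (y + 1)) as HM. fold M in HM. pose proof (coef_mass_nonneg M).
  set (d := Rmin 1 (eps / (coef_mass M + 1))).
  assert (Hd : 0 < d) by (apply Rmin_glb_lt; [lra|apply Rdiv_lt_0_compat; lra]).
  exists (mkposreal _ Hd). intros h Hh Hlt. simpl in Hlt.
  pose proof (Rmin_l 1 (eps / (coef_mass M + 1))).
  pose proof (Rmin_r 1 (eps / (coef_mass M + 1))).
  assert (Ha : Rabs h < 1) by (unfold d in Hlt; lra). apply Rabs_def2 in Ha.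
  destruct (Gamma_local M (y + h)) as [-> _]; [lra|].
  destruct (Gamma_local M y) as [-> ->]; [lra|].
  pose proof (hinges_taylor M y h) as Ht.
  assert (Hpos : 0 < Rabs h) by (apply Rabs_pos_lt; auto).
  replace ((hinges M (y + h) - hinges M y) / h - dhinges M y)
    with ((hinges M (y + h) - hinges M y - dhinges M y * h) / h) by (field; auto).
  unfold Rdiv. rewrite Rabs_mult, Rabs_inv.
  assert (Hhh : h * h = Rabs h * Rabs h)
    by (rewrite <- Rabs_mult; symmetry; apply Rabs_right; nra).
  rewrite Hhh in Ht.
  apply Rle_lt_trans with (coef_mass M * Rabs h).
  - apply (Rmult_le_reg_r (Rabs h)); auto.
    rewrite Rmult_assoc, Rinv_l, Rmult_1_r by lra. lra.
  - apply Rle_lt_trans with (coef_mass M * (eps / (coef_mass M + 1))).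
    { apply Rmult_le_compat_l; unfold d in Hlt; lra. }
    apply Rlt_le_trans with ((coef_mass M + 1) * (eps / (coef_mass M + 1)));
      [|right; field; lra].
    apply Rmult_lt_compat_r; [apply Rdiv_lt_0_compat|]; lra.
Qed.

Lemma dGamma_continuity y : continuity_pt dGamma y.
Proof.
  apply eps_continuity_pt. intros eps He. set (M := nat_above (y + 1)).
  pose proof (nat_above_ge (y + 1)) as HM. fold M in HM. pose proof (coef_mass_nonneg M).
  exists (Rmin 1 (eps / (2 * coef_mass M + 1))).
  split; [apply Rmin_glb_lt; [lra|apply Rdiv_lt_0_compat; lra]|].
  intros z Hz. pose proof (Rmin_l 1 (eps / (2 * coef_mass M + 1))).
  pose proof (Rmin_r 1 (eps / (2 * coef_mass M + 1))).
  assert (Ha : Rabs (z - y) < 1) by lra. apply Rabs_def2 in Ha.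
  destruct (Gamma_local M z) as [_ ->]; [lra|].
  destruct (Gamma_local M y) as [_ ->]; [lra|].
  eapply Rle_lt_trans; [apply dhinges_lipschitz|].
  apply Rle_lt_trans with (2 * coef_mass M * (eps / (2 * coef_mass M + 1))).
  { apply Rmult_le_compat_l; lra. }
  apply Rlt_le_trans with ((2 * coef_mass M + 1) * (eps / (2 * coef_mass M + 1)));
    [|right; field; lra].
  apply Rmult_lt_compat_r; [apply Rdiv_lt_0_compat|]; lra.
Qed.

Lemma Gamma_flat y : y <= 0 -> Gamma y = 0 /\ dGamma y = 0.
Proof.
  intros Hy. unfold Gamma, dGamma. generalize (nat_above y).
  induction n as [|n IH]; cbn [hinges dhinges].
  - destruct (sq_pos_flat (y - INR 0)) as [-> ->]; [simpl; lra|split; ring].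
  - destruct IH as [-> ->]. destruct (sq_pos_flat (y - INR (S n))) as [-> ->]; [|split; ring].
    pose proof (pos_INR (S n)); lra.
Qed.

Hypothesis c_nonneg : forall k, 0 <= c k.

Lemma hinges_nonneg n y : 0 <= hinges n y.
Proof.
  induction n; cbn [hinges].
  - pose proof (sq_pos_nonneg (y - INR 0)); pose proof (c_nonneg 0); nra.
  - pose proof (sq_pos_nonneg (y - INR (S n))); pose proof (c_nonneg (S n)); nra.
Qed.

Lemma hinges_ge_term n M y : (n <= M)%nat -> c n * sq_pos (y - INR n) <= hinges M y.
Proof.
  induction M as [|M IH]; intros Hn.
  - replace n with 0%nat by lia. cbn [hinges]. lra.
  - cbn [hinges]. destruct (Nat.eq_dec n (S M)) as [->|Hne].
    + pose proof (hinges_nonneg M y). lra.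
    + pose proof (IH ltac:(lia)). pose proof (sq_pos_nonneg (y - INR (S M))).
      pose proof (c_nonneg (S M)). nra.
Qed.

Lemma Gamma_nonneg y : 0 <= Gamma y.
Proof. apply hinges_nonneg. Qed.

Lemma Gamma_ge n y : INR n + 1 <= y -> c n <= Gamma y.
Proof.
  intros Hy. unfold Gamma. pose proof (nat_above_ge y).
  assert (Hn : (n <= nat_above y)%nat) by (apply INR_le; lra).
  pose proof (hinges_ge_term n (nat_above y) y Hn).
  pose proof (sq_pos_ge1 (y - INR n) ltac:(lra)). pose proof (c_nonneg n). nra.
Qed.
End Hinges.

(** A growth function for [b]: C^1, nonnegative, flat on (-oo,0], and
    dominating b_n on [n + 1, oo).  Gamma applied to max(b, 0) is one. *)
Definition growth_fun (b : nat -> R) (G G' : R -> R) : Prop :=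
  (forall y, derivable_pt_lim G y (G' y)) /\ (forall y, continuity_pt G' y) /\
  (forall y, y <= 0 -> G y = 0 /\ G' y = 0) /\ (forall y, 0 <= G y) /\
  (forall n y, INR n + 1 <= y -> b n <= G y).

Lemma growth_fun_exists (b : nat -> R) : exists G G' : R -> R, growth_fun b G G'.
Proof.
  set (c := fun k => Rmax (b k) 0).
  assert (c_nonneg : forall k, 0 <= c k) by (intro; apply Rmax_r).
  exists (Gamma c), (dGamma c). split; [|split; [|split; [|split]]].
  - apply Gamma_derive.
  - apply dGamma_continuity.
  - apply Gamma_flat.
  - apply Gamma_nonneg; auto.
  - intros n y Hy. apply Rle_trans with (c n); [apply Rmax_l|]. apply Gamma_ge; auto.
Qed.

Lemma unit_interval_index y : 1 <= y -> exists n, INR n + 1 <= y < INR n + 2.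
Proof.
  intros Hy. destruct (archimed y) as [A B].
  assert (Hu : (2 <= up y)%Z)
    by (assert (1 < IZR (up y)) as Hl by lra; apply lt_IZR in Hl; lia).
  exists (Z.to_nat (up y - 2)). rewrite INR_IZR_INZ, Z2Nat.id, minus_IZR by lia. lra.
Qed.

Lemma growth_fun_dominates b G G' a a' : growth_fun b G G' -> 1 <= Rmax a a' ->
  exists n, a < INR n + 2 /\ a' < INR n + 2 /\ b n <= G a + G a'.
Proof.
  intros [_ [_ [_ [Hpos Hge]]]] Hm. destruct (unit_interval_index _ Hm) as [n [Hn1 Hn2]].
  exists n. pose proof (Rmax_l a a'). pose proof (Rmax_r a a').
  pose proof (Hpos a). pose proof (Hpos a').
  split; [lra|split; [lra|]].
  destruct (Rle_dec a a'); [rewrite Rmax_right in Hn1 by lra | rewrite Rmax_left in Hn1 by lra];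
  [pose proof (Hge n a' Hn1) | pose proof (Hge n a Hn1)]; lra.
Qed.

(** * A time weight blowing up at both ends of (0,T)

    w(t) = (t - t0)^2 (1/t + 1/(T - t)) is C^1 on (0,T), vanishes to second
    order at t0, and its sublevel sets are compact subintervals of (0,T). *)

Definition time_weight (t0 T t : R) : R := (t - t0)^2 * (/ t + / (T - t)).
Definition dtime_weight (t0 T t : R) : R :=
  2 * (t - t0) * (/ t + / (T - t)) + (t - t0)^2 * (- / t^2 + / (T - t)^2).

Lemma dtime_weight_continuity t0 T t : 0 < t < T -> continuity_pt (dtime_weight t0 T) t.
Proof.
  intros. apply ex_derive_continuity. unfold dtime_weight. auto_derive. repeat split; nra.
Qed.

Lemma time_weight_ge_left t0 T t : 0 < t < T -> (t - t0)^2 / t <= time_weight t0 T t.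
Proof.
  intros Ht. unfold time_weight, Rdiv. assert (0 < / (T - t)) by (apply Rinv_0_lt_compat; lra).
  pose proof (pow2_ge_0 (t - t0)). nra.
Qed.

Lemma time_weight_ge_right t0 T t : 0 < t < T -> (t - t0)^2 / (T - t) <= time_weight t0 T t.
Proof.
  intros Ht. unfold time_weight, Rdiv. assert (0 < / t) by (apply Rinv_0_lt_compat; lra).
  pose proof (pow2_ge_0 (t - t0)). nra.
Qed.

Lemma time_weight_ge_T t0 T t : 0 < t < T -> (t - t0)^2 / T <= time_weight t0 T t.
Proof.
  intros Ht. eapply Rle_trans; [|apply time_weight_ge_left; auto]. unfold Rdiv.
  apply Rmult_le_compat_l; [apply pow2_ge_0|]. apply Rinv_le_contravar; lra.
Qed.

Lemma time_weight_sublevel t0 T A : 0 < t0 < T -> 0 <= A ->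
  exists a b, 0 < a <= b /\ b < T /\
    forall t, 0 < t < T -> time_weight t0 T t <= A -> a <= t <= b.
Proof.
  intros Ht0 HA. set (K := 4 * (A + 1)).
  exists (Rmin (t0/2) (t0^2 / K)), (Rmax ((t0 + T)/2) (T - (T - t0)^2 / K)).
  pose proof (Rmin_l (t0/2) (t0^2 / K)). pose proof (Rmin_r (t0/2) (t0^2 / K)).
  pose proof (Rmax_l ((t0 + T)/2) (T - (T - t0)^2 / K)).
  pose proof (Rmax_r ((t0 + T)/2) (T - (T - t0)^2 / K)).
  assert (HK : 0 < K) by (unfold K; lra).
  assert (0 < t0^2 / K) by (apply Rdiv_lt_0_compat; nra).
  assert (0 < (T - t0)^2 / K) by (apply Rdiv_lt_0_compat; nra).
  split; [split; [apply Rmin_glb_lt; lra|lra]|split; [apply Rmax_lub_lt; lra|]].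
  intros t Ht Hw. split.
  - apply Rnot_lt_le. intro Hlt.
    assert (Hsmall : K * t < t0^2).
    { apply (Rmult_lt_reg_r (/ K)); [apply Rinv_0_lt_compat; lra|].
      replace (K * t * / K) with t by (field; lra). unfold Rdiv in *. lra. }
    assert (Hq : (t - t0)^2 <= A * t).
    { pose proof (time_weight_ge_left t0 T t Ht) as Hl.
      apply (Rmult_le_reg_r (/ t)); [apply Rinv_0_lt_compat; lra|].
      replace (A * t * / t) with A by (field; lra). unfold Rdiv in Hl. lra. }
    unfold K in Hsmall. nra.
  - apply Rnot_lt_le. intro Hlt.
    assert (Hsmall : K * (T - t) < (T - t0)^2).
    { apply (Rmult_lt_reg_r (/ K)); [apply Rinv_0_lt_compat; lra|].
      replace (K * (T - t) * / K) with (T - t) by (field; lra). unfold Rdiv in *. lra. }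
    assert (Hq : (t - t0)^2 <= A * (T - t)).
    { pose proof (time_weight_ge_right t0 T t Ht) as Hl.
      apply (Rmult_le_reg_r (/ (T - t))); [apply Rinv_0_lt_compat; lra|].
      replace (A * (T - t) * / (T - t)) with A by (field; lra). unfold Rdiv in Hl. lra. }
    unfold K in Hsmall. nra.
Qed.

(** For h bounded below, the set {h(p + q) | q <= 0} is nonempty and bounded
    below, so H^-(p) is its genuine infimum: it lies below h(p)
    ([Hminus_le]), and any level above it exceeds some h(q), q <= p
    ([Hminus_lt]). *)
Lemma Hminus_Rinf_cond h p : (exists m, forall q, m <= h q) ->
  bound (fun x => exists q, q <= 0 /\ - x = h (p + q)) /\
  exists x, exists q, q <= 0 /\ - x = h (p + q).
Proof.
  intros [m Hm]. split.
  - exists (- m). intros x [q [_ Hx]]. pose proof (Hm (p + q)). lra.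
  - exists (- h p), 0. split; [lra|]. rewrite Ropp_involutive, Rplus_0_r; auto.
Qed.

Lemma Hminus_le h p : (exists m, forall q, m <= h q) -> Hminus h p <= h p.
Proof.
  intros Hb. unfold Hminus, Rinf.
  destruct (ClassicalDescription.excluded_middle_informative _) as [Hc|Hc];
    [|exfalso; apply Hc, Hminus_Rinf_cond, Hb].
  match goal with |- context [proj1_sig ?X] => generalize X; intros [x [Hub ?]] end. simpl.
  assert (- h p <= x); [|lra].
  apply Hub. exists 0. split; [lra|]. rewrite Ropp_involutive, Rplus_0_r; auto.
Qed.

Lemma Hminus_lt h p l : (exists m, forall q, m <= h q) -> Hminus h p < l ->
  exists q, q <= p /\ h q < l.
Proof.
  intros Hb. unfold Hminus, Rinf.
  destruct (ClassicalDescription.excluded_middle_informative _) as [Hc|Hc];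
    [|exfalso; apply Hc, Hminus_Rinf_cond, Hb].
  match goal with |- context [proj1_sig ?X] => generalize X; intros [x [? Hlub]] end.
  simpl. intros Hl.
  apply NNPP. intro Hn. assert (x <= - l); [|lra].
  apply Hlub. intros y [q [Hq Hy]]. apply Rnot_lt_le. intro Hlt. apply Hn.
  exists (p + q). split; lra.
Qed.

Lemma A1'_bounded_below N H i : A1' N H -> (i < N)%nat -> exists m, forall p, m <= H i p.
Proof.
  intros HA Hi. destruct (HA i Hi) as [_ [_ [p0 [H1 H2]]]]. exists (H i p0). intros p.
  destruct (Rle_dec p p0); [apply H1|apply H2]; lra.
Qed.

Lemma raise_above h p lam : (forall M, exists K, forall q, K < Rabs q -> M < h q) ->
  exists c, 0 <= c /\ (lam < h p -> c = 0) /\ lam < h (p + c).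
Proof.
  intros Hco. destruct (Rlt_le_dec lam (h p)) as [Hlt|Hle].
  - exists 0. rewrite Rplus_0_r. repeat split; auto; lra.
  - destruct (Hco lam) as [K HK]. pose proof (Rabs_pos K). pose proof (Rabs_pos p).
    pose proof (Rle_abs K). pose proof (Rle_abs (- p)) as Hp. rewrite Rabs_Ropp in Hp.
    exists (Rabs K + Rabs p + 1). split; [lra|split; [intro; lra|]].
    apply HK. rewrite Rabs_right; lra.
Qed.

Lemma lower_below h p lam : (exists m, forall q, m <= h q) -> Hminus h p < lam ->
  exists c, c <= 0 /\ h (p + c) < lam.
Proof.
  intros Hb Hl. destruct (Hminus_lt h p lam Hb Hl) as [q [Hq Hql]].
  exists (q - p). split; [lra|]. replace (p + (q - p)) with q by ring. auto.
Qed.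

Lemma maxUpTo_ge f n j : (j <= n)%nat -> f j <= maxUpTo f n.
Proof.
  induction n as [|n IH]; intros Hj; simpl; [replace j with 0%nat by lia; lra|].
  destruct (Nat.eq_dec j (S n)) as [->|]; [apply Rmax_r|].
  eapply Rle_trans; [apply IH; lia|apply Rmax_l].
Qed.

Lemma maxUpTo_attained f n : exists j, (j <= n)%nat /\ maxUpTo f n = f j.
Proof.
  induction n as [|n [j [Hj IH]]]; simpl; [exists 0%nat; auto|].
  unfold Rmax. destruct (Rle_dec (maxUpTo f n) (f (S n))).
  - exists (S n); auto.
  - exists j; split; auto.
Qed.

Lemma maxUpTo_ext f g n : (forall j, (j <= n)%nat -> f j = g j) -> maxUpTo f n = maxUpTo g n.
Proof.
  induction n as [|n IH]; simpl; intros Hfg; [apply Hfg; auto|].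
  rewrite IH, Hfg; auto.
Qed.

Lemma maxI_ge N f j : (j < N)%nat -> f j <= maxI N f.
Proof. intros. apply maxUpTo_ge. lia. Qed.

Lemma maxI_attained N f : (1 <= N)%nat -> exists j, (j < N)%nat /\ maxI N f = f j.
Proof.
  intros HN. destruct (maxUpTo_attained f (N - 1)) as [j [Hj E]].
  exists j; split; [lia|exact E].
Qed.

Lemma H0_ext N H p q : (1 <= N)%nat -> (forall j, (j < N)%nat -> p j = q j) ->
  H0 N H p = H0 N H q.
Proof. intros HN Hpq. apply maxUpTo_ext. intros j Hj. rewrite Hpq; auto. lia. Qed.

Section Junction.
Variables (N : nat) (e : nat -> R * R).
Hypothesis HJ : junction_dirs N e.

Lemma unit_dir k : (k < N)%nat -> normR2 (e k) = 1.
Proof. destruct HJ as [_ [Hu _]]. auto. Qed.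

Lemma pt_zero k : pt e k 0 = origin.
Proof. unfold pt, origin; f_equal; ring. Qed.

Lemma normR2_pt k s : (k < N)%nat -> 0 <= s -> normR2 (pt e k s) = s.
Proof.
  intros Hk Hs. pose proof (unit_dir k Hk) as Hu. unfold normR2, pt in *; cbn [fst snd].
  replace ((s * fst (e k)) ^ 2 + (s * snd (e k)) ^ 2)
    with (s^2 * (fst (e k) ^ 2 + snd (e k) ^ 2)) by ring.
  rewrite sqrt_mult_alt, Hu, <- Rsqr_pow2, sqrt_Rsqr by nra. lra.
Qed.

Lemma normR2_sub_pt k a b : (k < N)%nat ->
  normR2 (subR2 (pt e k a) (pt e k b)) = Rabs (a - b).
Proof.
  intros Hk. pose proof (unit_dir k Hk) as Hu. unfold normR2, subR2, pt in *; cbn [fst snd].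
  replace ((a * fst (e k) - b * fst (e k)) ^ 2 + (a * snd (e k) - b * snd (e k)) ^ 2)
    with ((a - b)^2 * (fst (e k) ^ 2 + snd (e k) ^ 2)) by ring.
  rewrite sqrt_mult_alt by apply pow2_ge_0.
  rewrite Hu, <- (Rsqr_pow2 (a - b)), Rmult_1_r. apply sqrt_Rsqr_abs.
Qed.

Lemma normR2_sub_origin x :
  normR2 (subR2 origin x) = normR2 x /\ normR2 (subR2 x origin) = normR2 x.
Proof. unfold normR2, subR2, origin; cbn [fst snd]. split; f_equal; ring. Qed.

Lemma pt_inj k k' s s' : (k < N)%nat -> (k' < N)%nat -> 0 < s -> 0 < s' ->
  pt e k s = pt e k' s' -> k = k' /\ s = s'.
Proof.
  intros Hk Hk' Hs Hs' Heq.
  assert (ss : s = s').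
  { rewrite <- (normR2_pt k s), <- (normR2_pt k' s'), Heq; auto; lra. }
  subst s'. split; auto. destruct (Nat.eq_dec k k') as [|Hne]; auto. exfalso.
  destruct HJ as [_ [_ Hd]]. apply (Hd k k' Hk Hk' Hne).
  unfold pt in Heq. injection Heq as H1 H2.
  destruct (e k) as [a b]; destruct (e k') as [c d]; simpl in *.
  f_equal; apply Rmult_eq_reg_l with s; lra.
Qed.

Lemma sameBranch_distinct k m a b : (k < N)%nat -> (m < N)%nat -> k <> m ->
  0 <= a -> 0 <= b -> sameBranch N e (pt e k a) (pt e m b) -> a = 0 \/ b = 0.
Proof.
  intros Hk Hm Hne Ha Hb [i [a' [b' [Hi [Ha' [Hb' [E1 E2]]]]]]].
  destruct (Req_dec a 0) as [|Ha0]; auto. destruct (Req_dec b 0) as [|Hb0]; auto.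
  exfalso. assert (Hnz : forall j s, (j < N)%nat -> 0 < s -> pt e j s <> origin).
  { intros j s Hj Hs E. pose proof (normR2_pt j s Hj ltac:(lra)) as Hn.
    rewrite E in Hn. replace (normR2 origin) with 0 in Hn; [lra|].
    unfold normR2, origin; cbn [fst snd].
    replace (0 ^ 2 + 0 ^ 2) with 0 by ring. symmetry; apply sqrt_0. }
  destruct (Req_dec a' 0) as [->|Ha'0].
  { rewrite pt_zero in E1. apply (Hnz k a); auto; lra. }
  destruct (Req_dec b' 0) as [->|Hb'0].
  { rewrite pt_zero in E2. apply (Hnz m b); auto; lra. }
  destruct (pt_inj k i a a') as [-> _]; auto; try lra.
  destruct (pt_inj m i b b') as [-> _]; auto; lra.
Qed.

Lemma dJ_pt k m a b : (k < N)%nat -> (m < N)%nat -> 0 <= a -> 0 <= b ->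
  dJ N e (pt e k a) (pt e m b) = if Nat.eq_dec k m then Rabs (a - b) else a + b.
Proof.
  intros Hk Hm Ha Hb. unfold dJ.
  destruct (ClassicalDescription.excluded_middle_informative
              (sameBranch N e (pt e k a) (pt e m b))) as [Hs|Hs];
  destruct (Nat.eq_dec k m) as [<-|Hne].
  - apply normR2_sub_pt; auto.
  - destruct (sameBranch_distinct k m a b) as [->| ->]; auto; rewrite pt_zero.
    + rewrite (proj1 (normR2_sub_origin _)), normR2_pt; auto; lra.
    + rewrite (proj2 (normR2_sub_origin _)), normR2_pt; auto; lra.
  - exfalso; apply Hs. exists k, a, b. auto.
  - rewrite !normR2_pt; auto.
Qed.

Lemma dJ_refl k s : (k < N)%nat -> 0 <= s -> dJ N e (pt e k s) (pt e k s) = 0.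
Proof.
  intros. rewrite dJ_pt; auto. destruct Nat.eq_dec; [|lia].
  rewrite Rminus_diag, Rabs_R0; auto.
Qed.

Lemma inJT_pt T t x : inJT N e T t x ->
  exists k s, (k < N)%nat /\ 0 <= s /\ x = pt e k s /\ 0 < t < T.
Proof. intros [Ht [k [s [Hk [Hs ->]]]]]. exists k, s; auto. Qed.

(** A function on J_T is continuous as soon as it is continuous on each closed
    branch; at the origin all branches must be controlled at once. *)
Lemma cont_JT_of_branches T g :
  (forall k, (k < N)%nat -> cont_HS T (fun t s => g t (pt e k s))) -> cont_JT N e T g.
Proof.
  intros Hb t x Hx eps He.
  destruct (inJT_pt _ _ _ Hx) as [k [s [Hk [Hs [-> Ht]]]]].
  destruct (Rle_lt_or_eq_dec 0 s Hs) as [Hsp|<-].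
  - destruct (Hb k Hk t s (conj Ht Hs) eps He) as [d [Hd Hd']].
    exists (Rmin d s); split; [apply Rmin_glb_lt; auto|].
    intros t' y [Hy [H1 H2]].
    destruct (inJT_pt _ _ _ Hy) as [m [s' [Hm [Hs' [-> Ht']]]]].
    rewrite dJ_pt in H2; auto. pose proof (Rmin_l d s). pose proof (Rmin_r d s).
    destruct (Nat.eq_dec k m) as [<-|]; [|lra].
    apply Hd'; auto; [split; auto|lra|rewrite Rabs_minus_sym; lra].
  - destruct (common_radius (fun m d => forall t' s', inHS T t' s' ->
       Rabs (t' - t) < d -> Rabs (s' - 0) < d ->
       Rabs (g t' (pt e m s') - g t (pt e m 0)) < eps) N) as [d [Hd Hd']].
    + intros m d d' Hdd Hm t' s' H1 H2 H3. apply Hm; auto; lra.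
    + intros m Hm. apply (Hb m Hm t 0 (conj Ht (Rle_refl 0)) eps He).
    + exists d; split; auto. intros t' y [Hy [H1 H2]].
      destruct (inJT_pt _ _ _ Hy) as [m [s' [Hm [Hs' [-> Ht']]]]].
      rewrite dJ_pt in H2; auto; try lra.
      rewrite (pt_zero k), <- (pt_zero m). apply Hd'; auto; [split; auto|].
      destruct (Nat.eq_dec k m); rewrite Rminus_0_r, Rabs_right; try lra.
      rewrite Rabs_minus_sym, Rminus_0_r, Rabs_right in H2; lra.
Qed.

Lemma inBallJT_mono T t x r r' t' y :
  inBallJT N e T t x r t' y -> r <= r' -> inBallJT N e T t x r' t' y.
Proof. intros [Hy [H1 H2]] Hr. split; [exact Hy|split; lra]. Qed.

Lemma cont_JT_plus T f g :
  cont_JT N e T f -> cont_JT N e T g -> cont_JT N e T (fun t x => f t x + g t x).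
Proof.
  intros Hf Hg t x Hx eps He.
  destruct (Hf t x Hx (eps/2)) as [d1 [Hd1 H1]]; [lra|].
  destruct (Hg t x Hx (eps/2)) as [d2 [Hd2 H2]]; [lra|].
  exists (Rmin d1 d2); split; [apply Rmin_glb_lt; auto|].
  intros t' y Hb.
  specialize (H1 t' y (inBallJT_mono _ _ _ _ _ _ _ Hb (Rmin_l d1 d2))).
  specialize (H2 t' y (inBallJT_mono _ _ _ _ _ _ _ Hb (Rmin_r d1 d2))).
  replace (f t' y + g t' y - (f t x + g t x)) with ((f t' y - f t x) + (g t' y - g t x)) by ring.
  eapply Rle_lt_trans; [apply Rabs_triang|]. lra.
Qed.

Lemma cont_JT_opp T f : cont_JT N e T f -> cont_JT N e T (fun t x => - f t x).
Proof.
  intros Hf t x Hx eps He. destruct (Hf t x Hx eps He) as [d [Hd Hd']].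
  exists d; split; auto. intros t' y Hb.
  replace (- f t' y - - f t x) with (- (f t' y - f t x)) by ring. rewrite Rabs_Ropp; auto.
Qed.

Lemma C1star_plus T f ft fx g gt gx : C1star N e T f ft fx -> C1star N e T g gt gx ->
  C1star N e T (fun t x => f t x + g t x) (fun t x => ft t x + gt t x)
                (fun k t s => fx k t s + gx k t s).
Proof.
  intros [A1 A2] [B1 B2]. split; [apply cont_JT_plus; auto|].
  intros i Hi. apply (C1_HS_plus T _ _ _ _ _ _ (A2 i Hi) (B2 i Hi)).
Qed.

Lemma C1star_opp T f ft fx : C1star N e T f ft fx ->
  C1star N e T (fun t x => - f t x) (fun t x => - ft t x) (fun k t s => - fx k t s).
Proof.
  intros [A1 A2]. split; [apply cont_JT_opp; auto|].
  intros i Hi. apply (C1_HS_opp T _ _ _ (A2 i Hi)).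
Qed.

Lemma usc_JT_sub_cont T u phi :
  usc_JT N e T u -> cont_JT N e T phi -> usc_JT N e T (fun t x => u t x - phi t x).
Proof.
  intros Hu Hp t x Hx eps He.
  destruct (Hu t x Hx (eps/2)) as [d1 [Hd1 H1]]; [lra|].
  destruct (Hp t x Hx (eps/2)) as [d2 [Hd2 H2]]; [lra|].
  exists (Rmin d1 d2); split; [apply Rmin_glb_lt; auto|].
  intros t' y Hb.
  specialize (H1 t' y (inBallJT_mono _ _ _ _ _ _ _ Hb (Rmin_l d1 d2))).
  specialize (H2 t' y (inBallJT_mono _ _ _ _ _ _ _ Hb (Rmin_r d1 d2))).
  apply Rabs_def2 in H2. lra.
Qed.

Lemma lsc_JT_opp T u : lsc_JT N e T u -> usc_JT N e T (fun t x => - u t x).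
Proof.
  intros Hu t x Hx eps He. destruct (Hu t x Hx eps He) as [d [Hd Hd']].
  exists d; split; auto. intros t' y Hb. specialize (Hd' t' y Hb). lra.
Qed.

Lemma usc_JT_bounded T v a b L : usc_JT N e T v -> 0 < a <= b -> b < T -> 0 <= L ->
  exists M, forall k t s, (k < N)%nat -> a <= t <= b -> 0 <= s <= L -> v t (pt e k s) <= M.
Proof.
  intros Hv Hab Hb HL.
  destruct (common_bound (fun k M => forall t s, a <= t <= b -> 0 <= s <= L ->
                            v t (pt e k s) <= M) N) as [M HM].
  - intros m M M' HMM Hm t s Ht Hs. apply Rle_trans with M; auto.
  - intros k Hk. apply (usc_HS_bounded T (fun t s => v t (pt e k s))); try lra.
    intros t s [Ht Hs] eps He.
    destruct (Hv t (pt e k s) (conj Ht (ex_intro _ k (ex_intro _ s (conj Hk (conj Hs eq_refl)))))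
                 eps He) as [d [Hd Hd']].
    exists d; split; auto. intros t' s' [Ht' Hs'] H1 H2. apply Hd'.
    split; [split; auto; exists k, s'; auto|split; auto].
    rewrite dJ_pt; auto. destruct (Nat.eq_dec k k) as [_|]; [|lia].
    rewrite Rabs_minus_sym; auto.
  - exists M. intros k t s Hk. apply HM; auto.
Qed.

(** * Localization of test functions *)

(** Squared geodesic distance to [pt e i0 s0], in branch coordinates. *)
Definition branch_sqdist (i0 : nat) (s0 : R) (k : nat) (s : R) : R :=
  if Nat.eq_dec i0 k then (s0 - s)^2 else (s0 + s)^2.
Definition dbranch_sqdist (i0 : nat) (s0 : R) (k : nat) (s : R) : R :=
  if Nat.eq_dec i0 k then -2 * (s0 - s) else 2 * (s0 + s).

Lemma dJ_sq_pt i0 s0 k s : (i0 < N)%nat -> (k < N)%nat -> 0 <= s0 -> 0 <= s ->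
  (dJ N e (pt e i0 s0) (pt e k s))^2 = branch_sqdist i0 s0 k s.
Proof.
  intros. rewrite dJ_pt; auto. unfold branch_sqdist; destruct Nat.eq_dec; auto. apply pow2_abs.
Qed.

Lemma usc_JT_bounded_sublevel T v t0 i0 s0 A D : usc_JT N e T v ->
  0 < t0 < T -> (i0 < N)%nat -> 0 <= s0 -> 0 <= A -> 0 <= D ->
  exists M, forall t x, inJT N e T t x -> time_weight t0 T t <= A ->
    (dJ N e (pt e i0 s0) x)^2 <= D -> v t x <= M.
Proof.
  intros Hv Ht0 Hi0 Hs0 HA HD.
  destruct (time_weight_sublevel t0 T A Ht0 HA) as [a [b [Hab [Hb Hsub]]]].
  destruct (usc_JT_bounded T v a b (s0 + 1 + D)) as [M HM]; auto; try lra.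
  exists M. intros t x Hx Hw Hd.
  destruct (inJT_pt _ _ _ Hx) as [k [s [Hk [Hs [-> Ht]]]]].
  apply HM; auto. split; auto.
  rewrite dJ_sq_pt in Hd; auto. unfold branch_sqdist in Hd. destruct Nat.eq_dec; nra.
Qed.

Section Penalty.
(** The penalty G(level of the time weight) + G(level of the squared
    distance to x0 = pt e i0 s0); the levels are <= 0 near (t0, x0), so the
    penalty vanishes there to first order. *)
Variables (T : R) (G G' : R -> R) (t0 : R) (i0 : nat) (s0 c1 c2 : R).

Definition time_level (t : R) : R := (time_weight t0 T t - c1) / c1.
Definition space_level (x : R * R) : R := ((dJ N e (pt e i0 s0) x)^2 - c2) / c2.
Definition penalty (t : R) (x : R * R) : R := G (time_level t) + G (space_level x).
Definition dt_penalty (t : R) : R := G' (time_level t) * (dtime_weight t0 T t / c1).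
Definition dx_penalty (k : nat) (s : R) : R :=
  G' ((branch_sqdist i0 s0 k s - c2) / c2) * (dbranch_sqdist i0 s0 k s / c2).

Hypotheses (HGd : forall y, derivable_pt_lim G y (G' y))
           (HGc : forall y, continuity_pt G' y).
Hypotheses (Hi0 : (i0 < N)%nat) (Hs0 : 0 <= s0) (Hc1 : 0 < c1) (Hc2 : 0 < c2).

Lemma penalty_time_C1 :
  C1_HS T (fun t _ => G (time_level t)) (fun t _ => dt_penalty t) (fun _ _ => 0).
Proof.
  assert (Hl : forall t, 0 < t < T -> derivable_pt_lim time_level t (dtime_weight t0 T t / c1)).
  { intros t Ht. apply is_derive_Reals. unfold time_level, time_weight, dtime_weight.
    auto_derive; [repeat split; nra|field; repeat split; lra]. }
  apply C1_HS_time.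
  - intros t Ht. exact (derivable_pt_lim_comp _ G t _ _ (Hl t Ht) (HGd _)).
  - intros t Ht. apply continuity_pt_mult.
    + apply (continuity_pt_comp time_level G'); [|apply HGc].
      exact (derivable_pt_lim_continuity _ _ _ (Hl t Ht)).
    + apply continuity_pt_div; [apply dtime_weight_continuity; auto|
                                apply continuity_pt_const; intros ? ?; auto|lra].
Qed.

Lemma penalty_space_C1 k : (k < N)%nat -> C1_HS T (fun _ s => G (space_level (pt e k s)))
  (fun _ _ => 0) (fun _ s => dx_penalty k s).
Proof.
  intros Hk.
  set (q := fun s => (branch_sqdist i0 s0 k s - c2) / c2).
  assert (Hq : forall s, derivable_pt_lim q s (dbranch_sqdist i0 s0 k s / c2)).
  { intros s. apply is_derive_Reals. unfold q, branch_sqdist, dbranch_sqdist.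
    destruct Nat.eq_dec; auto_derive; auto; field; lra. }
  apply (C1_HS_ext T _ _ _ (fun _ s => G (q s)) (fun _ _ => 0) (fun _ s => dx_penalty k s));
    auto.
  - intros t s [_ Hs]. unfold space_level, q. rewrite dJ_sq_pt; auto.
  - apply C1_HS_space.
    + intros s. exact (derivable_pt_lim_comp q G s _ _ (Hq s) (HGd _)).
    + intros s. apply continuity_pt_mult.
      * apply (continuity_pt_comp q G'); [|apply HGc].
        exact (derivable_pt_lim_continuity _ _ _ (Hq s)).
      * apply ex_derive_continuity. unfold dbranch_sqdist.
        destruct Nat.eq_dec; auto_derive; auto.
Qed.

Lemma penalty_C1star :
  C1star N e T penalty (fun t _ => dt_penalty t) (fun k _ s => dx_penalty k s).
Proof.
  assert (Hb : forall k, (k < N)%nat -> C1_HS T (fun t s => penalty t (pt e k s))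
                 (fun t _ => dt_penalty t) (fun _ s => dx_penalty k s)).
  { intros k Hk. eapply C1_HS_ext;
      [| | |exact (C1_HS_plus _ _ _ _ _ _ _ penalty_time_C1 (penalty_space_C1 k Hk))];
      intros t s _; cbv beta; [reflexivity|ring|ring]. }
  split; auto. apply cont_JT_of_branches. intros k Hk. exact (C1_HS_cont _ _ _ _ (Hb k Hk)).
Qed.

Lemma penalty_flat (Gflat : forall y, y <= 0 -> G y = 0 /\ G' y = 0) :
  penalty t0 (pt e i0 s0) = 0 /\ dt_penalty t0 = 0 /\
  (forall k s, (k < N)%nat -> 0 <= s -> pt e i0 s0 = pt e k s -> dx_penalty k s = 0).
Proof.
  assert (Hneg : forall a c, 0 < c -> a <= 0 -> (a - c) / c <= 0).
  { intros a c Hc Ha. unfold Rdiv. assert (0 < / c) by (apply Rinv_0_lt_compat; auto). nra. }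
  assert (Htime : time_level t0 <= 0).
  { apply Hneg; auto. unfold time_weight. lra. }
  assert (Hspace : space_level (pt e i0 s0) <= 0).
  { apply Hneg; auto. rewrite dJ_refl; auto. lra. }
  split; [|split].
  - unfold penalty. rewrite (proj1 (Gflat _ Htime)), (proj1 (Gflat _ Hspace)). ring.
  - unfold dt_penalty. rewrite (proj2 (Gflat _ Htime)). ring.
  - intros k s Hk Hs Ex. unfold dx_penalty.
    rewrite <- dJ_sq_pt, <- Ex, dJ_refl by auto.
    assert (Hz : (0 ^ 2 - c2) / c2 <= 0) by (apply Hneg; lra).
    rewrite (proj2 (Gflat _ Hz)). ring.
Qed.
End Penalty.

Lemma level_lt a c m : 0 < c -> (a - c) / c < m -> a < c * (m + 1).
Proof.
  intros Hc Hm. apply (Rmult_lt_compat_r c) in Hm; auto. unfold Rdiv in Hm.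
  rewrite Rmult_assoc, Rinv_l in Hm; lra.
Qed.

Lemma level_outside_ball T t0 i0 s0 r t y : 0 < T -> 0 < r -> inJT N e T t y ->
  ~ inBallJT N e T t0 (pt e i0 s0) r t y ->
  1 <= Rmax (time_level T t0 (r^2 / (2 * T)) t) (space_level i0 s0 (r^2 / 2) y).
Proof.
  intros HT Hr Hy Hout.
  assert (Hge1 : forall a c, 0 < c -> 2 * c <= a -> 1 <= (a - c) / c).
  { intros a c Hc Ha. apply (Rmult_le_reg_r c); auto. unfold Rdiv.
    rewrite Rmult_assoc, Rinv_l; lra. }
  destruct (Rlt_dec (Rabs (t - t0)) r) as [Ht|Ht].
  - destruct (Rlt_dec (dJ N e (pt e i0 s0) y) r) as [Hd|Hd]; [exfalso; apply Hout; split; auto|].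
    eapply Rle_trans; [|apply Rmax_r]. apply Hge1; [nra|]. nra.
  - eapply Rle_trans; [|apply Rmax_l]. apply Hge1; [apply Rdiv_lt_0_compat; nra|].
    destruct Hy as [Hty _].
    assert (r^2 <= (t - t0)^2) by (rewrite <- (pow2_abs (t - t0)); nra).
    eapply Rle_trans; [|apply time_weight_ge_T; auto].
    replace (2 * (r ^ 2 / (2 * T))) with (r^2 / T) by (field; lra).
    unfold Rdiv; apply Rmult_le_compat_r; auto. left; apply Rinv_0_lt_compat; lra.
Qed.

Lemma localize T v phi Dt Dx t0 x0 r :
  usc_JT N e T v -> C1star N e T phi Dt Dx -> inJT N e T t0 x0 -> 0 < r ->
  (forall t y, inBallJT N e T t0 x0 r t y -> v t y <= phi t y) ->
  exists phi2 Dt2 Dx2, C1star N e T phi2 Dt2 Dx2 /\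
    (forall t y, inJT N e T t y -> v t y <= phi2 t y) /\
    phi2 t0 x0 = phi t0 x0 /\ Dt2 t0 x0 = Dt t0 x0 /\
    (forall k s, (k < N)%nat -> 0 <= s -> x0 = pt e k s -> Dx2 k t0 s = Dx k t0 s).
Proof.
  intros Hv Hphi Hx0 Hr Hloc.
  destruct (inJT_pt _ _ _ Hx0) as [i0 [s0 [Hi0 [Hs0 [-> Ht0]]]]].
  assert (HT : 0 < T) by lra.
  set (c1 := r^2 / (2 * T)). set (c2 := r^2 / 2).
  assert (Hc1 : 0 < c1) by (unfold c1; apply Rdiv_lt_0_compat; nra).
  assert (Hc2 : 0 < c2) by (unfold c2; nra).
  (* bounds b n of v - phi on the sublevel sets of level n + 2 *)
  assert (Hlev : forall n : nat, exists M, forall t x, inJT N e T t x ->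
            time_weight t0 T t <= c1 * (INR n + 3) ->
            (dJ N e (pt e i0 s0) x)^2 <= c2 * (INR n + 3) -> v t x - phi t x <= M).
  { intros n. pose proof (pos_INR n).
    apply usc_JT_bounded_sublevel; auto; [apply usc_JT_sub_cont, Hphi; auto|nra|nra]. }
  destruct (ClassicalEpsilon.choice _ Hlev) as [b Hb].
  destruct (growth_fun_exists b) as [G [G' HG]].
  pose proof HG as [HGd [HGc [HGflat [HGpos _]]]].
  destruct (penalty_flat T G G' t0 i0 s0 c1 c2) as [P0 [Pt Px]]; auto.
  exists (fun t x => phi t x + penalty T G t0 i0 s0 c1 c2 t x),
         (fun t x => Dt t x + dt_penalty T G' t0 c1 t),
         (fun k t s => Dx k t s + dx_penalty G' i0 s0 c2 k s).
  split; [apply C1star_plus; auto; apply penalty_C1star; auto|].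
  split; [|split; [rewrite P0; ring|split; [rewrite Pt; ring|]]].
  - intros t y Hy. unfold penalty.
    pose proof (HGpos (time_level T t0 c1 t)). pose proof (HGpos (space_level i0 s0 c2 y)).
    destruct (classic (inBallJT N e T t0 (pt e i0 s0) r t y)) as [Hin|Hout].
    + pose proof (Hloc t y Hin). lra.
    + pose proof (level_outside_ball T t0 i0 s0 r t y HT Hr Hy Hout) as Hlevel.
      destruct (growth_fun_dominates b G G' _ _ HG Hlevel) as [n [Hn1 [Hn2 Hbn]]].
      fold c1 c2 in Hn1, Hn2, Hbn. unfold time_level, space_level in Hn1, Hn2.
      apply level_lt in Hn1; auto. apply level_lt in Hn2; auto.
      assert (v t y - phi t y <= b n) by (apply Hb; auto; lra). lra.
  - intros k s Hk Hs Ex. rewrite (Px k s); auto. ring.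
Qed.

(** * Adding slopes on the branches

    For slopes c_k, the function equal to c_k |x| on J_k is in C^1_*, with
    zero time derivative and space derivative c_k on J_k. *)

Definition slopefun (c : nat -> R) (x : R * R) : R :=
  match ClassicalDescription.excluded_middle_informative
          (exists k s, (k < N)%nat /\ 0 < s /\ x = pt e k s) with
  | left h => c (proj1_sig (constructive_indefinite_description _ h)) * normR2 x
  | right _ => 0
  end.

Lemma slopefun_pt c k s : (k < N)%nat -> 0 <= s -> slopefun c (pt e k s) = c k * s.
Proof.
  intros Hk Hs. unfold slopefun.
  destruct (ClassicalDescription.excluded_middle_informative _) as [h|h].
  - destruct (constructive_indefinite_description _ h) as [k' [s' [Hk' [Hs' E]]]]. simpl.
    rewrite normR2_pt; auto. destruct (Rle_lt_or_eq_dec 0 s Hs) as [Hsp|<-]; [|ring].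
    destruct (pt_inj k k' s s') as [<- _]; auto.
  - destruct (Rle_lt_or_eq_dec 0 s Hs) as [Hsp|<-]; [|ring].
    exfalso. apply h. exists k, s. auto.
Qed.

Lemma slopefun_origin c : slopefun c origin = 0.
Proof.
  destruct HJ as [HN _]. rewrite <- (pt_zero 0), slopefun_pt; [ring|lia|lra].
Qed.

Lemma slopefun_C1star T c :
  C1star N e T (fun _ x => slopefun c x) (fun _ _ => 0) (fun k _ _ => c k).
Proof.
  assert (Hlin : forall k s, derivable_pt_lim (fun s => c k * s) s (c k)).
  { intros. apply is_derive_Reals. auto_derive; auto. ring. }
  assert (Hb : forall k, (k < N)%nat ->
            C1_HS T (fun _ s => slopefun c (pt e k s)) (fun _ _ => 0) (fun _ _ => c k)).
  { intros k Hk. eapply C1_HS_ext;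
      [| | |apply (C1_HS_space T (fun s => c k * s) (fun _ => c k) (Hlin k))]; auto.
    - intros t s [_ Hs]. apply slopefun_pt; auto.
    - intros s. apply continuity_pt_const. intros x y; auto. }
  split; auto. apply cont_JT_of_branches. intros k Hk. exact (C1_HS_cont _ _ _ _ (Hb k Hk)).
Qed.

Lemma slope_perturbation T (u phi Dt : R -> R * R -> R) Dx c (sgn : R) :
  C1star N e T phi Dt Dx -> (forall k, 0 <= sgn * c k) ->
  (forall t y, inJT N e T t y -> sgn * u t y <= sgn * phi t y) ->
  C1star N e T (fun t x => phi t x + slopefun c x) (fun t x => Dt t x + 0)
                (fun k t s => Dx k t s + c k) /\
  (forall t y, inJT N e T t y -> sgn * u t y <= sgn * (phi t y + slopefun c y)) /\
  (forall t, phi t origin + slopefun c origin = phi t origin).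
Proof.
  intros Hphi Hc Hle. split; [apply C1star_plus; auto; apply slopefun_C1star|split].
  - intros t y Hy. destruct (inJT_pt _ _ _ Hy) as [k [s [Hk [Hs [-> _]]]]].
    rewrite slopefun_pt; auto. pose proof (Hle t _ Hy). pose proof (Hc k). nra.
  - intros t. rewrite slopefun_origin. ring.
Qed.

(** * The junction condition

    If the relaxed junction condition holds for every test function touching
    globally, then so does the max_i H_i^- condition: otherwise slopes on the
    branches produce a test function violating the relaxed condition too. *)

Lemma subchar_junction T H u t0 phi Dt Dx : A1' N H -> subchar N e T H u ->
  C1star N e T phi Dt Dx -> (forall t y, inJT N e T t y -> u t y <= phi t y) ->
  inJT N e T t0 origin -> u t0 origin = phi t0 origin ->
  Dt t0 origin + H0 N H (fun i => Dx i t0 0) <= 0.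
Proof.
  intros HA Hsub Hphi Hle Hx Heq. destruct HJ as [HN _]. apply Rnot_lt_le. intro Hgt.
  set (lam := - Dt t0 origin). set (p := fun i => Dx i t0 0).
  (* slopes c_k >= 0 pushing every H_k above lam, vanishing where H_k(p_k) > lam *)
  assert (Hck : forall k, exists ck, 0 <= ck /\
            ((k < N)%nat -> (lam < H k (p k) -> ck = 0) /\ lam < H k (p k + ck))).
  { intros k. destruct (lt_dec k N) as [Hk|Hk].
    - destruct (raise_above (H k) (p k) lam) as [ck Hck]; [apply (HA k Hk)|].
      exists ck. tauto.
    - exists 0. split; [lra|tauto]. }
  destruct (ClassicalEpsilon.choice _ Hck) as [c Hc].
  destruct (slope_perturbation T u phi Dt Dx c 1 Hphi) as [Hphi' [Hle' Hval]].
  { intros k. pose proof (proj1 (Hc k)). lra. }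
  { intros t y Hy. pose proof (Hle t y Hy). lra. }
  assert (Hglob : forall t y, inJT N e T t y -> u t y <= phi t y + slopefun c y)
    by (intros t y Hy; pose proof (Hle' t y Hy); lra).
  assert (Htouch : u t0 origin = phi t0 origin + slopefun c origin) by (rewrite Hval; auto).
  destruct (Hsub _ _ _ Hphi' Hglob t0 origin Hx Htouch) as [_ Hjunc].
  destruct (Hjunc eq_refl) as [[i [Hi Hlei]]|Hmax].
  - destruct (proj2 (Hc i) Hi) as [_ Hl]. unfold p, lam in Hl. lra.
  - (* the index j realizing the max of the H_j^-(p_j) received no slope *)
    destruct (maxI_attained N (fun i => Hminus (H i) (p i)) HN) as [j [Hj Emax]].
    assert (Hjl : lam < Hminus (H j) (p j)).
    { unfold H0 in Hgt. unfold lam. rewrite <- Emax. unfold p. cbv beta. lra. }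
    assert (Hcj : c j = 0).
    { apply (proj2 (Hc j) Hj). eapply Rlt_le_trans; [apply Hjl|].
      apply Hminus_le, (A1'_bounded_below N); auto. }
    pose proof (maxI_ge N (fun i => Hminus (H i) (Dx i t0 0 + c i)) j Hj) as Hge.
    simpl in Hge. rewrite Hcj, Rplus_0_r in Hge.
    unfold H0 in Hmax. unfold p, lam in Hjl. lra.
Qed.

Lemma superchar_junction T H u t0 phi Dt Dx : A1' N H -> superchar N e T H u ->
  C1star N e T phi Dt Dx -> (forall t y, inJT N e T t y -> phi t y <= u t y) ->
  inJT N e T t0 origin -> u t0 origin = phi t0 origin ->
  0 <= Dt t0 origin + H0 N H (fun i => Dx i t0 0).
Proof.
  intros HA Hsup Hphi Hle Hx Heq. apply Rnot_lt_le. intro Hlt.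
  set (lam := - Dt t0 origin). set (p := fun i => Dx i t0 0).
  (* slopes c_k <= 0 pushing every H_k below lam *)
  assert (Hck : forall k, exists ck, ck <= 0 /\ ((k < N)%nat -> H k (p k + ck) < lam)).
  { intros k. destruct (lt_dec k N) as [Hk|Hk]; [|exists 0; split; [lra|tauto]].
    destruct (lower_below (H k) (p k) lam) as [ck Hck].
    - apply (A1'_bounded_below N); auto.
    - eapply Rle_lt_trans; [apply (maxI_ge N (fun i => Hminus (H i) (p i))); auto|].
      unfold H0 in Hlt. unfold lam, p. lra.
    - exists ck. tauto. }
  destruct (ClassicalEpsilon.choice _ Hck) as [c Hc].
  destruct (slope_perturbation T u phi Dt Dx c (-1) Hphi) as [Hphi' [Hle' Hval]].
  { intros k. pose proof (proj1 (Hc k)). lra. }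
  { intros t y Hy. pose proof (Hle t y Hy). lra. }
  assert (Hglob : forall t y, inJT N e T t y -> phi t y + slopefun c y <= u t y)
    by (intros t y Hy; pose proof (Hle' t y Hy); lra).
  assert (Htouch : u t0 origin = phi t0 origin + slopefun c origin) by (rewrite Hval; auto).
  destruct (Hsup _ _ _ Hphi' Hglob t0 origin Hx Htouch) as [_ Hjunc].
  destruct (Hjunc eq_refl) as [[i [Hi Hgei]]|Hmax].
  - pose proof (proj2 (Hc i) Hi) as Hbelow. unfold p, lam in *. lra.
  - destruct (maxI_attained N (fun i => Hminus (H i) (Dx i t0 0 + c i)) (proj1 HJ))
      as [j [Hj Emax]].
    pose proof (proj2 (Hc j) Hj) as Hbelow.
    pose proof (Hminus_le (H j) (Dx j t0 0 + c j) (A1'_bounded_below N H j HA Hj)) as Hinf.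
    unfold H0 in Hmax. rewrite Emax in Hmax. unfold p, lam in *. lra.
Qed.

(** Global touching is local touching in any ball, and the max_i H_i^-
    condition is one of the two alternatives of the relaxed condition. *)
Lemma subsol_subchar T H u : subsol N e T H u -> subchar N e T H u.
Proof.
  intros [_ Hs] phi Dt Dx Hphi Hglob t x Hx Heq.
  assert (Hball : forall t' y, inBallJT N e T t x 1 t' y -> u t' y <= phi t' y)
    by (intros t' y [Hy _]; auto).
  destruct (Hs phi Dt Dx Hphi t x 1 Hx ltac:(lra) Hball Heq) as [Hbranch Hjunc].
  split; [exact Hbranch|intros Ho; right; auto].
Qed.

Lemma supersol_superchar T H u : supersol N e T H u -> superchar N e T H u.
Proof.
  intros [_ Hs] phi Dt Dx Hphi Hglob t x Hx Heq.
  assert (Hball : forall t' y, inBallJT N e T t x 1 t' y -> phi t' y <= u t' y)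
    by (intros t' y [Hy _]; auto).
  destruct (Hs phi Dt Dx Hphi t x 1 Hx ltac:(lra) Hball Heq) as [Hbranch Hjunc].
  split; [exact Hbranch|intros Ho; right; auto].
Qed.

(** Conversely, localize the test function, then use the branch conditions
    directly and [subchar_junction] at the origin. *)
Lemma subchar_subsol T H u : A1' N H -> usc_JT N e T u -> subchar N e T H u ->
  subsol N e T H u.
Proof.
  intros HA Husc Hch. split; auto. intros phi Dt Dx Hphi t0 x0 r Hx Hr Hloc Heq.
  destruct (localize T u phi Dt Dx t0 x0 r) as [psi [Dt2 [Dx2 [Hpsi [Hglob [Hv [Hdt Hdx]]]]]]];
    auto.
  assert (Heq' : u t0 x0 = psi t0 x0) by (rewrite Hv; auto).
  split.
  - intros i s Hst. pose proof (proj1 (Hch _ _ _ Hpsi Hglob t0 x0 Hx Heq') i s Hst) as Hi.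
    destruct Hst as [Hi0 [Hs Ex]]. rewrite Hdt, (Hdx i s) in Hi; auto; lra.
  - intros ->. pose proof (subchar_junction T H u t0 _ _ _ HA Hch Hpsi Hglob Hx Heq') as Hj.
    rewrite Hdt, (H0_ext N H _ (fun i => Dx i t0 0)) in Hj; [exact Hj|apply HJ|].
    intros k Hk. apply Hdx; auto; [lra|]. rewrite pt_zero; auto.
Qed.

(** For supersolutions, localize -phi against the usc function -u. *)
Lemma superchar_supersol T H u : A1' N H -> lsc_JT N e T u -> superchar N e T H u ->
  supersol N e T H u.
Proof.
  intros HA Hlsc Hch. split; auto. intros phi Dt Dx Hphi t0 x0 r Hx Hr Hloc Heq.
  assert (Hloc' : forall t y, inBallJT N e T t0 x0 r t y -> - u t y <= - phi t y)
    by (intros t y Hb; pose proof (Hloc t y Hb); lra).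
  destruct (localize T _ _ _ _ t0 x0 r (lsc_JT_opp T u Hlsc) (C1star_opp _ _ _ _ Hphi)
              Hx Hr Hloc') as [psi [Dt2 [Dx2 [Hpsi [Hglob [Hv [Hdt Hdx]]]]]]].
  pose proof (C1star_opp _ _ _ _ Hpsi) as Hpsi'.
  assert (Hglob' : forall t y, inJT N e T t y -> - psi t y <= u t y)
    by (intros t y Hy; pose proof (Hglob t y Hy); lra).
  assert (Heq' : u t0 x0 = - psi t0 x0) by (rewrite Hv; lra).
  split.
  - intros i s Hst. pose proof (proj1 (Hch _ _ _ Hpsi' Hglob' t0 x0 Hx Heq') i s Hst) as Hi.
    destruct Hst as [Hi0 [Hs Ex]]. cbv beta in Hi.
    rewrite Hdt, (Hdx i s), !Ropp_involutive in Hi; auto; lra.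
  - intros ->. pose proof (superchar_junction T H u t0 _ _ _ HA Hch Hpsi' Hglob' Hx Heq') as Hj.
    cbv beta in Hj. rewrite Hdt, Ropp_involutive in Hj.
    rewrite (H0_ext N H _ (fun i => Dx i t0 0)) in Hj; [exact Hj|apply HJ|].
    intros k Hk. rewrite Hdx, Ropp_involutive; auto; [lra|]. rewrite pt_zero; auto.
Qed.
End Junction.

Theorem mainTheorem5 (N : nat) (e : nat -> R * R) (T : R) (H : nat -> R -> R)
  (u : R -> R * R -> R) :
  junction_dirs N e -> 0 < T -> A1' N H ->
  (usc_JT N e T u -> (subsol N e T H u <-> subchar N e T H u)) /\
  (lsc_JT N e T u -> (supersol N e T H u <-> superchar N e T H u)).
Proof.
  intros HJ _ HA. split.
  - intros Husc. split; [apply subsol_subchar|apply subchar_subsol]; auto.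
  - intros Hlsc. split; [apply supersol_superchar|apply superchar_supersol]; auto.
Qed.
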